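(* There exist absolute constants $c_1,c_2>0$ such that for every $n\ge1$ and every boolean function $f:\{-1,1\}^n\to\{-1,1\}$, $$\mathrm{Ent}(f)\le c_1 I(f)+c_2\sum_{k=2}^{n} I_k(f)\log\frac{1}{I_k(f)},$$ with the convention $I_k(f)\log\frac{1}{I_k(f)}=0$ when $I_k(f)=0$ (i.e. the term for coordinate $k=1$ can be omitted).
   Context: Let $x$ be uniformly distributed on $\{-1,1\}^n$; $\mu_k$ flips the $k$-th coordinate. $I_k(f)=\mathbb{P}_x[f(x)\neq f(\mu_k(x))]$, $I(f)=\sum_k I_k(f)$, $\hat f(S)=\mathbb{E}_x[f(x)\prod_{k\in S}x_k]$ for $S\subseteq[n]$, and $\mathrm{Ent}(f)=\sum_{S\subseteq[n]}\hat f(S)^2\log_2\frac{1}{\hat f(S)^2}$ (terms with $\hat f(S)=0$ are $0$). *)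

From Stdlib Require Import Reals.
From mathcomp Require Import all_boot all_order all_algebra.
From mathcomp Require Import Rstruct.
Set Implicit Arguments. Unset Strict Implicit. Unset Printing Implicit Defensive.
Import Order.TTheory GRing.Theory Num.Theory.
Local Open Scope ring_scope.

(* The cube {-1,1}^n: a point is a boolean vector, coordinate k has value
   x_k = -1 if the bit is true and +1 if it is false. *)
Definition cube (n : nat) : finType := {ffun 'I_n -> bool}.

Definition coord (n : nat) (x : cube n) (k : 'I_n) : R :=
  if x k then -1 else 1.

Definition flip (n : nat) (k : 'I_n) (x : cube n) : cube n :=
  [ffun i => if i == k then ~~ x i else x i].

Definition is_boolean (n : nat) (f : cube n -> R) : Prop :=
  forall x, f x = 1 \/ f x = -1.

Definition Ex (n : nat) (g : cube n -> R) : R :=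
  (\sum_(x : cube n) g x) / (2 ^+ n).

Definition infl (n : nat) (f : cube n -> R) (k : 'I_n) : R :=
  Ex (fun x => if f x != f (flip k x) then 1 else 0).

Definition total_infl (n : nat) (f : cube n -> R) : R :=
  \sum_(k : 'I_n) infl f k.

Definition fourier (n : nat) (f : cube n -> R) (S : {set 'I_n}) : R :=
  Ex (fun x => f x * \prod_(k in S) coord x k).

Definition log2 (t : R) : R := (ln t / ln 2)%R.

Definition fourier_ent (n : nat) (f : cube n -> R) : R :=
  \sum_(S : {set 'I_n})
    (if fourier f S == 0 then 0
     else fourier f S ^+ 2 * log2 (1 / fourier f S ^+ 2)).

Definition xlog1x (t : R) : R := if t == 0 then 0 else t * log2 (1 / t).

(* Put p_S = f^(S)^2.  By Parseval p is a probability distribution on the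
   subsets of the coordinates, and I_k = sum_(S ∋ k) p_S.  Since p_S <= I_k for
   k ∈ S and p_S <= 1 - I_k otherwise, Gibbs' inequality against the product
   distribution with marginals I_k bounds the entropy of p by
   sum_k H(I_k) <= sum_k I_k log(1/I_k) + O(I).  The term of the first
   coordinate is absorbed by the others: if I_1 < 1/2, then |f^(∅)| <= 1 - I_1
   and |f^({1})| <= I_1 force the other influences to sum to
   T >= 2 I_1 (1 - I_1) >= I_1, and for T <= 1 the subadditivity of
   t log(1/t) gives I_1 log(1/I_1) <= sum_(k>1) I_k log(1/I_k) + O(T). *)

From Pilot Require Import Defs.
From Stdlib Require Import Reals.
From mathcomp Require Import all_boot all_order all_algebra.
From mathcomp Require Import Rstruct.
From mathcomp Require Import ring lra.
Import Order.TTheory GRing.Theory Num.Theory.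
Local Open Scope ring_scope.
Set Implicit Arguments. Unset Strict Implicit. Unset Printing Implicit Defensive.

(* [all_algebra] also exports [coord], the coordinates in a vector space. *)
Notation coord := Defs.coord.

Lemma ln_invr (x : R) : 0 < x -> ln x^-1 = - ln x.
Proof. by move=> /RltP; exact: ln_Rinv. Qed.

Lemma ln_mulr (x y : R) : 0 < x -> 0 < y -> ln (x * y) = ln x + ln y.
Proof. by move=> /RltP hx /RltP hy; exact: ln_mult. Qed.

Lemma ln_ler (x y : R) : 0 < x -> x <= y -> ln x <= ln y.
Proof.
move=> hx; rewrite le_eqVlt => /predU1P [-> //|hxy].
by apply/ltW/RltP/ln_increasing; apply/RltP.
Qed.

Lemma ln_le_subr1 (x : R) : 0 < x -> ln x <= x - 1.
Proof.
move=> hx; suff : 1 + ln x <= x by lra.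
have := exp_ineq1_le (ln x); rewrite exp_ln; last exact/RltP.
by move/RleP.
Qed.

Lemma ln_prod (I : finType) (a : I -> R) : (forall i, 0 < a i) ->
  ln (\prod_i a i) = \sum_i ln (a i).
Proof.
move=> a_gt0; suff [] : 0 < \prod_i a i /\ ln (\prod_i a i) = \sum_i ln (a i) by [].
apply: (big_rec2 (fun s t => 0 < t /\ ln t = s)); first by rewrite ln_1.
by move=> i s t _ [t_gt0 <-]; rewrite mulr_gt0 ?ln_mulr.
Qed.

Lemma ln2_ge_half : 2^-1 <= ln 2.
Proof.
have := ln_le_subr1 (x := 2^-1); rewrite invr_gt0 ltr0n => /(_ isT).
by rewrite ln_invr ?ltr0n //; lra.
Qed.

Lemma ln2_gt0 : 0 < ln 2.
Proof. by apply: lt_le_trans ln2_ge_half; rewrite invr_gt0 ltr0n. Qed.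

(* [t log(1/t)] in nats; [xlog1x] and [fourier_ent] use base 2. *)
Definition xln1x (t : R) := - (t * ln t).

Lemma xln1x0 : xln1x 0 = 0.
Proof. by rewrite /xln1x mul0r oppr0. Qed.

Lemma xln1x_gibbs (p q : R) : 0 <= p -> 0 <= q -> (0 < p -> 0 < q) ->
  xln1x p <= - (p * ln q) + q - p.
Proof.
move=> p_ge0 q_ge0 pq; have [->|p_neq0] := eqVneq p 0.
  by rewrite xln1x0 mul0r oppr0 add0r addr0.
have p_gt0 : 0 < p by rewrite lt_def p_neq0.
have q_gt0 := pq p_gt0.
have := ln_le_subr1 (x := q / p); rewrite divr_gt0 // => /(_ isT).
rewrite ln_mulr ?invr_gt0 // ln_invr // => h.
have : p * (ln q - ln p) <= p * (q / p - 1) by rewrite ler_pM2l.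
rewrite /xln1x [p * (q / p - 1)]mulrBr mulrCA divff ?mulr1 //.
lra.
Qed.

Lemma xln1x_le_1subr (t : R) : 0 <= t -> xln1x t <= 1 - t.
Proof.
move=> t_ge0; have := @xln1x_gibbs t 1 t_ge0 ler01 (fun _ => ltr01).
by rewrite ln_1 mulr0 oppr0 add0r.
Qed.

Lemma xln1x_ge_mul_ln (t s : R) : 0 <= t -> t <= s -> - (t * ln s) <= xln1x t.
Proof.
move=> t_ge0 t_le_s; have [->|t_neq0] := eqVneq t 0; first by rewrite xln1x0 mul0r oppr0.
have t_gt0 : 0 < t by rewrite lt_def t_neq0.
by rewrite lerN2 ler_pM2l // ln_ler.
Qed.

Lemma xln1x_ge0 (t : R) : 0 <= t -> t <= 1 -> 0 <= xln1x t.
Proof.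
move=> t_ge0 t_le1; apply: le_trans (xln1x_ge_mul_ln t_ge0 t_le1).
by rewrite ln_1 mulr0 oppr0.
Qed.

Lemma xln1x_sum_le (I : finType) (P : pred I) (t : I -> R) :
  (forall i, P i -> 0 <= t i) ->
  xln1x (\sum_(i | P i) t i) <= \sum_(i | P i) xln1x (t i).
Proof.
move=> t_ge0; rewrite /xln1x mulr_suml -sumrN; apply: ler_sum => i Pi.
apply: xln1x_ge_mul_ln; first exact: t_ge0.
by rewrite (bigD1 i) //= lerDl sumr_ge0 // => j /andP [] /t_ge0.
Qed.

Lemma xln1x_le_add (s t : R) : 0 <= s -> s <= t -> t <= 1 -> xln1x s <= xln1x t + t.
Proof.
move=> s_ge0 s_le_t t_le1; have t_ge0 := le_trans s_ge0 s_le_t.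
have [t0|t_neq0] := eqVneq t 0.
  have -> : s = 0 by apply/le_anti; rewrite s_ge0 andbT -t0.
  by rewrite t0 xln1x0 addr0.
have t_gt0 : 0 < t by rewrite lt_def t_neq0.
have ln_t_le0 : ln t <= 0 by have := ln_ler t_gt0 t_le1; rewrite ln_1.
have := xln1x_gibbs s_ge0 t_ge0 (fun _ => t_gt0).
rewrite /xln1x; nra.
Qed.

Lemma gibbs_ineq (I : finType) (p q : I -> R) :
  (forall i, 0 <= p i) -> (forall i, 0 <= q i) -> (forall i, 0 < p i -> 0 < q i) ->
  \sum_i xln1x (p i) <= - \sum_i p i * ln (q i) + \sum_i q i - \sum_i p i.
Proof.
move=> p_ge0 q_ge0 pq; rewrite -sumrN -big_split -sumrB /=.
by apply: ler_sum => i _; exact: xln1x_gibbs (p_ge0 i) (q_ge0 i) (pq i).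
Qed.

Lemma sum_subsets_prod (K : comPzRingType) (I : finType) (a b : I -> K) :
  \sum_(S : {set I}) \prod_i (if i \in S then a i else b i) = \prod_i (a i + b i).
Proof.
have -> : \prod_i (a i + b i) = \prod_i \sum_(j : bool) (if j then a i else b i).
  by apply: eq_bigr => i _; rewrite big_bool.
rewrite bigA_distr_bigA /= (reindex (fun g : {ffun I -> bool} => [set i | g i])) /=.
  by apply: eq_bigr => g _; apply: eq_bigr => i _; rewrite inE.
exists (fun S : {set I} => [ffun i => i \in S]) => g _.
  by apply/ffunP => i; rewrite ffunE inE.
by apply/setP => i; rewrite inE ffunE.
Qed.

Section Fourier.

Variable n : nat.
Implicit Types (f g : cube n -> R) (x y : cube n) (S : {set 'I_n}) (k : 'I_n).

Definition chi S x : R := \prod_(k in S) coord x k.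

Lemma ExE g : Ex g = (\sum_x g x) / 2 ^+ n.
Proof. by []. Qed.

Lemma fourierE g S : fourier g S = Ex (fun x => g x * chi S x).
Proof. by []. Qed.

Lemma two_expn_gt0 : 0 < (2 ^+ n : R).
Proof. by rewrite exprn_gt0. Qed.

Lemma Ex_le g h : (forall x, g x <= h x) -> Ex g <= Ex h.
Proof. by move=> gh; rewrite !ExE ler_pM2r ?invr_gt0 ?two_expn_gt0 // ler_sum. Qed.

Lemma Ex_norm g : `|Ex g| <= Ex (fun x => `|g x|).
Proof.
rewrite !ExE normrM normfV [`|2 ^+ n|]gtr0_norm ?two_expn_gt0 //.
by rewrite ler_pM2r ?invr_gt0 ?two_expn_gt0 // ler_norm_sum.
Qed.

Lemma Ex_cst c : Ex (fun _ : cube n => c) = c.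
Proof.
rewrite ExE sumr_const /cube card_ffun card_bool card_ord -[c *+ _]mulr_natr natrX.
by rewrite mulfK // gt_eqF ?two_expn_gt0.
Qed.

Lemma ExB g h : Ex (fun x => g x - h x) = Ex g - Ex h.
Proof. by rewrite !ExE sumrB mulrBl. Qed.

Lemma coord_mul x y k : coord x k * coord y k = if x k == y k then 1 else -1.
Proof. by rewrite /coord; case: (x k); case: (y k); rewrite /= ?mulr1 ?mulrN1 ?opprK. Qed.

Lemma norm_chi S x : `|chi S x| = 1.
Proof.
rewrite normr_prod; apply: big1 => k _.
by rewrite /coord; case: (x k); rewrite ?normrN normr1.
Qed.

Lemma sum_chi_mul x y :
  \sum_S chi S x * chi S y = if x == y then 2 ^+ n else 0.
Proof.
under eq_bigr => S _ do rewrite -big_split /= big_mkcond /=.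
rewrite (sum_subsets_prod (fun k => coord x k * coord y k) (fun _ => 1)).
have [<-|x_neq_y] := eqVneq x y.
  under eq_bigr => k _ do rewrite coord_mul eqxx.
  by rewrite prodr_const card_ord.
have [k xy_k] : exists k, x k != y k.
  apply/existsP; apply: contraNT x_neq_y => /existsPn xy.
  by apply/eqP/ffunP => k; apply/eqP/negPn.
by rewrite (bigD1 k) //= coord_mul (negbTE xy_k) addNr mul0r.
Qed.

Lemma parseval g : \sum_S fourier g S ^+ 2 = Ex (fun x => g x ^+ 2).
Proof.
have sum_sq : \sum_S (\sum_x g x * chi S x) ^+ 2 = \sum_x g x ^+ 2 * 2 ^+ n.
  transitivity (\sum_x \sum_y g x * g y * \sum_S chi S x * chi S y).
    under eq_bigr => S _ do rewrite expr2 mulr_suml.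
    rewrite exchange_big; apply: eq_bigr => x _.
    under eq_bigr => S _ do rewrite mulr_sumr.
    rewrite exchange_big; apply: eq_bigr => y _; rewrite mulr_sumr.
    by apply: eq_bigr => S _; ring.
  apply: eq_bigr => x _; under eq_bigr => y _ do rewrite sum_chi_mul.
  rewrite (bigD1 x) //= eqxx big1 ?addr0 ?expr2 // => y.
  by rewrite eq_sym => /negbTE ->; rewrite mulr0.
under eq_bigr => S _ do rewrite fourierE ExE expr_div_n.
rewrite -mulr_suml sum_sq -mulr_suml expr2 invfM mulrA mulfK //.
by rewrite gt_eqF ?two_expn_gt0.
Qed.

Lemma flipK k : involutive (flip k).
Proof. by move=> x; apply/ffunP => i; rewrite !ffunE; case: eqP => // ->; rewrite negbK. Qed.

Lemma sum_flip k (F : cube n -> R) : \sum_x F (flip k x) = \sum_x F x.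
Proof. by rewrite [RHS](reindex_inj (inv_inj (@flipK k))). Qed.

Lemma chi_flip k S x : chi S (flip k x) = (if k \in S then -1 else 1) * chi S x.
Proof.
have coord_flip i : coord (flip k x) i = if i == k then - coord x i else coord x i.
  by rewrite /coord ffunE; case: eqP => // _; case: (x i); rewrite ?opprK.
rewrite /chi; case: ifPn => kS; last first.
  rewrite mul1r; apply: eq_bigr => i iS; rewrite coord_flip; case: eqP => // ik.
  by move: iS; rewrite ik (negbTE kS).
rewrite (bigD1 k) //= [in RHS](bigD1 k) //= coord_flip eqxx mulrA mulN1r.
by congr (_ * _); apply: eq_bigr => i /andP [_ /negbTE]; rewrite coord_flip => ->.
Qed.

Definition deriv k g x := (g x - g (flip k x)) / 2.

Lemma fourier_deriv k g S :
  fourier (deriv k g) S = if k \in S then fourier g S else 0.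
Proof.
have sum_flipped : \sum_x g (flip k x) * chi S x
    = (if k \in S then -1 else 1) * \sum_x g x * chi S x.
  rewrite -[LHS](sum_flip k) mulr_sumr; apply: eq_bigr => x _.
  by rewrite chi_flip flipK mulrCA.
rewrite !fourierE !ExE.
have -> : \sum_x deriv k g x * chi S x
    = (\sum_x g x * chi S x - \sum_x g (flip k x) * chi S x) / 2.
  by rewrite -sumrB mulr_suml; apply: eq_bigr => x _; rewrite /deriv; ring.
rewrite sum_flipped; case: ifP => _; last by rewrite mul1r subrr !mul0r.
by field; rewrite gt_eqF ?two_expn_gt0.
Qed.

Lemma fourierB g h S : fourier (fun x => g x - h x) S = fourier g S - fourier h S.
Proof.
rewrite !fourierE !ExE -mulrBl -sumrB; congr (_ / _).
by apply: eq_bigr => x _; rewrite mulrBl.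
Qed.

Lemma norm_fourier_le g S : `|fourier g S| <= Ex (fun x => `|g x|).
Proof.
apply: le_trans (Ex_norm _) _; apply: Ex_le => x.
by rewrite normrM norm_chi mulr1.
Qed.

Section Boolean.

Variable f : cube n -> R.
Hypothesis f_bool : is_boolean f.

Lemma norm_boolean x : `|f x| = 1.
Proof. by case: (f_bool x) => ->; rewrite ?normrN normr1. Qed.

Lemma sqr_boolean x : f x ^+ 2 = 1.
Proof. by case: (f_bool x) => ->; rewrite ?sqrrN expr1n. Qed.

Lemma deriv_boolean k x : deriv k f x = if f x != f (flip k x) then f x else 0.
Proof.
rewrite /deriv; case: ifPn => [f_neq|/negPn/eqP <-]; last by rewrite subrr mul0r.
have -> : f (flip k x) = - f x.
  by move: f_neq; case: (f_bool x) => ->; case: (f_bool (flip k x)) => ->; rewrite ?eqxx ?opprK.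
by rewrite opprK -mulr2n -[f x *+ 2]mulr_natr mulfK ?pnatr_eq0.
Qed.

Lemma infl_deriv k : infl f k = Ex (fun x => deriv k f x ^+ 2).
Proof.
rewrite /infl !ExE; congr (_ / _); apply: eq_bigr => x _.
by rewrite deriv_boolean; case: ifP; rewrite ?expr0n // sqr_boolean.
Qed.

Lemma norm_deriv k x : `|deriv k f x| = deriv k f x ^+ 2.
Proof.
by rewrite deriv_boolean; case: ifP; rewrite ?normr0 ?expr0n // norm_boolean sqr_boolean.
Qed.

Lemma norm_sub_deriv k x : `|f x - deriv k f x| = 1 - deriv k f x ^+ 2.
Proof.
rewrite deriv_boolean; case: ifP; last by rewrite subr0 expr0n subr0 norm_boolean.
by rewrite subrr normr0 sqr_boolean subrr.
Qed.

Lemma sum_fourier_sqr : \sum_S fourier f S ^+ 2 = 1.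
Proof.
rewrite parseval -[RHS](Ex_cst 1) !ExE; congr (_ / _); apply: eq_bigr => x _.
by rewrite sqr_boolean.
Qed.

Lemma infl_fourier k : infl f k = \sum_(S : {set 'I_n} | k \in S) fourier f S ^+ 2.
Proof.
rewrite infl_deriv -parseval [RHS]big_mkcond /=; apply: eq_bigr => S _.
by rewrite fourier_deriv; case: ifP; rewrite ?expr0n.
Qed.

Lemma one_sub_infl_fourier k :
  1 - infl f k = \sum_(S : {set 'I_n} | k \notin S) fourier f S ^+ 2.
Proof.
rewrite -sum_fourier_sqr (bigID (fun S : {set 'I_n} => k \in S)) /=.
by rewrite infl_fourier addrAC subrr add0r.
Qed.

Lemma infl_ge0 k : 0 <= infl f k.
Proof. by rewrite infl_fourier sumr_ge0 // => S _; exact: sqr_ge0. Qed.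

Lemma infl_le1 k : infl f k <= 1.
Proof. by rewrite -subr_ge0 one_sub_infl_fourier sumr_ge0 // => S _; exact: sqr_ge0. Qed.

Lemma norm_fourier_set1 k : `|fourier f [set k]| <= infl f k.
Proof.
have <- : fourier (deriv k f) [set k] = fourier f [set k] by rewrite fourier_deriv set11.
apply: le_trans (norm_fourier_le _ _) _.
by rewrite infl_deriv; apply: Ex_le => x; rewrite norm_deriv.
Qed.

Lemma norm_fourier_set0 k : `|fourier f set0| <= 1 - infl f k.
Proof.
(* [f - deriv k f] is the average of [f] along the edges in direction [k]. *)
have <- : fourier (fun x => f x - deriv k f x) set0 = fourier f set0.
  by rewrite fourierB fourier_deriv in_set0 subr0.
apply: le_trans (norm_fourier_le _ _) _.
rewrite infl_deriv -[X in X - _](Ex_cst 1) -ExB.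
by apply: Ex_le => x; rewrite norm_sub_deriv.
Qed.

Lemma fourier_sqr_le_infl k S :
  fourier f S ^+ 2 <= if k \in S then infl f k else 1 - infl f k.
Proof.
have sqr_le_sum (P : pred {set 'I_n}) :
    P S -> fourier f S ^+ 2 <= \sum_(T : {set 'I_n} | P T) fourier f T ^+ 2.
  by move=> PS; rewrite (bigD1 S) //= lerDl sumr_ge0 // => T _; exact: sqr_ge0.
case: ifPn => kS; first by rewrite infl_fourier; exact: (sqr_le_sum (fun T => k \in T)).
by rewrite one_sub_infl_fourier; exact: (sqr_le_sum (fun T => k \notin T)).
Qed.

Lemma fourier_entropy_le_binary_entropy :
  \sum_S xln1x (fourier f S ^+ 2) <= \sum_k (xln1x (infl f k) + xln1x (1 - infl f k)).
Proof.
(* Gibbs against the product distribution [S |-> \prod_k a k S]. *)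
pose a k S := if k \in S then infl f k else 1 - infl f k.
have p_ge0 S : 0 <= fourier f S ^+ 2 by exact: sqr_ge0.
have q_ge0 S : 0 <= \prod_k a k S.
  by apply: prodr_ge0 => k _; rewrite /a; case: ifP; rewrite ?subr_ge0 ?infl_ge0 ?infl_le1.
have a_gt0 S k : 0 < fourier f S ^+ 2 -> 0 < a k S.
  by move=> pS; exact: lt_le_trans pS (fourier_sqr_le_infl k S).
have q_gt0 S : 0 < fourier f S ^+ 2 -> 0 < \prod_k a k S.
  by move=> pS; apply: prodr_gt0 => k _; exact: a_gt0.
have sum_q : \sum_S \prod_k a k S = 1.
  by rewrite sum_subsets_prod big1 // => k _; rewrite addrC subrK.
have ln_q S : fourier f S ^+ 2 * ln (\prod_k a k S) = \sum_k fourier f S ^+ 2 * ln (a k S).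
  have [->|pS] := eqVneq (fourier f S ^+ 2) 0; first by rewrite mul0r big1 // => k _; rewrite mul0r.
  by rewrite ln_prod ?mulr_sumr // => k; apply: a_gt0; rewrite lt_def pS p_ge0.
have cross k : \sum_S fourier f S ^+ 2 * ln (a k S)
    = infl f k * ln (infl f k) + (1 - infl f k) * ln (1 - infl f k).
  rewrite (bigID (fun S : {set 'I_n} => k \in S)) /=; congr (_ + _).
    by rewrite {1}infl_fourier mulr_suml; apply: eq_bigr => S kS; rewrite /a kS.
  by rewrite {1}one_sub_infl_fourier mulr_suml; apply: eq_bigr => S /negbTE kS; rewrite /a kS.
apply: le_trans (gibbs_ineq p_ge0 q_ge0 q_gt0) _.
rewrite sum_q sum_fourier_sqr addrK (eq_bigr _ (fun S _ => ln_q S)) exchange_big /=.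
by rewrite -sumrN; apply: ler_sum => k _; rewrite cross /xln1x opprD.
Qed.

Lemma fourier_entropy_le_infl :
  \sum_S xln1x (fourier f S ^+ 2) <= \sum_k xln1x (infl f k) + total_infl f.
Proof.
apply: le_trans fourier_entropy_le_binary_entropy _; rewrite /total_infl -big_split /=.
apply: ler_sum => k _; rewrite lerD2l.
by apply: le_trans (xln1x_le_1subr _) _; rewrite ?subr_ge0 ?infl_le1 // opprB addrC subrK.
Qed.

End Boolean.

End Fourier.

Section FirstCoordinate.

Variables (m : nat) (f : cube m.+1 -> R).
Hypothesis f_bool : is_boolean f.

Lemma infl_ord0_le_rest :
  2 * infl f ord0 * (1 - infl f ord0) <= \sum_(k : 'I_m.+1 | (0 < k)%N) infl f k.
Proof.
set mu := infl f ord0.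
have sqr_le (x b : R) : `|x| <= b -> x ^+ 2 <= b ^+ 2.
  move=> x_le_b; rewrite -real_normK ?num_real // ler_pXn2r // nnegrE //.
  exact: le_trans (normr_ge0 x) x_le_b.
have p_set0 : fourier f set0 ^+ 2 <= (1 - mu) ^+ 2 by apply/sqr_le/norm_fourier_set0.
have p_set1 : fourier f [set ord0] ^+ 2 <= mu ^+ 2 by apply/sqr_le/norm_fourier_set1.
have := sum_fourier_sqr f_bool.
rewrite (bigD1 set0) //= (bigD1 [set ord0]) /=; last by apply/set0Pn; exists ord0; rewrite set11.
set rest := \sum_(S | _) _ => parseval1.
suff : rest <= \sum_(k : 'I_m.+1 | (0 < k)%N) infl f k by nra.
under eq_bigr => k _ do rewrite infl_fourier // big_mkcond.
rewrite exchange_big /= (bigID (fun S : {set 'I_m.+1} => (S != set0) && (S != [set ord0]))) /=.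
have summand_ge0 (S : {set 'I_m.+1}) (k : 'I_m.+1) : 0 <= if k \in S then fourier f S ^+ 2 else 0.
  by case: ifP => _; rewrite ?sqr_ge0.
rewrite -[rest]addr0; apply: lerD; last by do 2!apply: sumr_ge0 => ? _.
apply: ler_sum => S /andP [S_neq0 S_neq1].
have /subsetPn [k kS k_neq0] : ~~ (S \subset [set ord0]) by rewrite subset1 negb_or S_neq0 S_neq1.
rewrite (bigD1 k) /=; last by move: k_neq0; rewrite in_set1 lt0n.
by rewrite ifT // lerDl sumr_ge0 // => i _; exact: summand_ge0.
Qed.

Lemma xln1x_infl_ord0_le :
  xln1x (infl f ord0) <=
    \sum_(k : 'I_m.+1 | (0 < k)%N) xln1x (infl f k) + total_infl f.
Proof.
set mu := infl f ord0; set T := \sum_(k : 'I_m.+1 | (0 < k)%N) infl f k.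
have mu_ge0 : 0 <= mu := infl_ge0 f_bool ord0.
have T_ge0 : 0 <= T by apply: sumr_ge0 => k _; exact: infl_ge0.
have rest_ge0 : 0 <= \sum_(k : 'I_m.+1 | (0 < k)%N) xln1x (infl f k).
  by apply: sumr_ge0 => k _; rewrite xln1x_ge0 ?infl_ge0 ?infl_le1.
have -> : total_infl f = mu + T.
  by rewrite /total_infl (bigD1 ord0) //=; congr (_ + _); apply: eq_bigl => k; rewrite lt0n.
have mu_bound := xln1x_le_1subr mu_ge0.
have [mu_ge_half|mu_lt_half] := leP 1 (2 * mu); first by lra.
have mu_le_T : mu <= T.
  have : 0 <= mu * (1 - 2 * mu) by rewrite mulr_ge0 // subr_ge0 ltW.
  have := infl_ord0_le_rest; rewrite -/mu -/T; lra.
have [T_ge1|T_lt1] := leP 1 T; first by lra.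
have := xln1x_le_add mu_ge0 mu_le_T (ltW T_lt1).
have := xln1x_sum_le (P := fun k : 'I_m.+1 => (0 < k)%N) (fun k _ => infl_ge0 f_bool k).
rewrite -/T; lra.
Qed.

End FirstCoordinate.

Lemma xlog1x_mul_ln2 (t : R) : 0 <= t -> xlog1x t * ln 2 = xln1x t.
Proof.
move=> t_ge0; rewrite /xlog1x; case: eqP => [->|/eqP t_neq0]; first by rewrite mul0r xln1x0.
have t_gt0 : 0 < t by rewrite lt_def t_neq0.
rewrite /log2; have -> : ln (1 / t) = - ln t.
  by rewrite -ln_invr //; congr ln; exact: Rmult_1_l.
by rewrite -mulrA divfK ?mulrN // gt_eqF // ln2_gt0.
Qed.

Lemma fourier_ent_mul_ln2 n (f : cube n -> R) :
  fourier_ent f * ln 2 = \sum_(S : {set 'I_n}) xln1x (fourier f S ^+ 2).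
Proof.
rewrite /fourier_ent mulr_suml; apply: eq_bigr => S _.
have := xlog1x_mul_ln2 (sqr_ge0 (fourier f S)); rewrite /xlog1x sqrf_eq0.
by case: eqP => [_|_ <-]; rewrite ?mul0r.
Qed.

Theorem mainTheorem3 :
  exists c1 c2 : R, 0 < c1 /\ 0 < c2 /\
    forall (n : nat) (f : cube n -> R),
      (0 < n)%N -> is_boolean f ->
      fourier_ent f <=
        c1 * total_infl f + c2 * \sum_(k : 'I_n | (0 < k)%N) xlog1x (infl f k).
Proof.
exists 4, 2; split; first by rewrite ltr0n.
split; first by rewrite ltr0n.
move=> [|m] f // _ f_bool.
set X := \sum_(k : 'I_m.+1 | (0 < k)%N) xlog1x (infl f k).
have X_ln2 : X * ln 2 = \sum_(k : 'I_m.+1 | (0 < k)%N) xln1x (infl f k).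
  by rewrite mulr_suml; apply: eq_bigr => k _; rewrite xlog1x_mul_ln2 ?infl_ge0.
have split_ord0 : \sum_k xln1x (infl f k) = xln1x (infl f ord0) + X * ln 2.
  by rewrite X_ln2 (bigD1 ord0) //=; congr (_ + _); apply: eq_bigl => k; rewrite lt0n.
have := fourier_entropy_le_infl f_bool; rewrite -fourier_ent_mul_ln2 split_ord0.
have := xln1x_infl_ord0_le f_bool; rewrite -X_ln2.
have total_infl_ge0 : 0 <= total_infl f by apply: sumr_ge0 => k _; exact: infl_ge0.
have : 0 <= total_infl f * (2 * ln 2 - 1).
  by rewrite mulr_ge0 // subr_ge0 -ler_pdivrMl ?ltr0n // mulr1 ln2_ge_half.
move=> infl_bound ord0_le ent_le; rewrite -(ler_pM2r ln2_gt0); lra.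
Qed.
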